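(* Let $L_m$ be as defined in the context. If $m\in\{6,8,10\}$, then $\lambda(L_m)>\sqrt{m-2}$. If $m\ge 12$ is even, then $\sqrt{m-2.5}<\lambda(L_m)<\sqrt{m-2}$. Moreover, $\lambda(L_6)\approx 2.1149$, $\lambda(L_8)\approx 2.4938$ and $\lambda(L_{10})\approx 2.8424$.
   Context: For even $m\ge 6$, $L_m$ is the graph obtained from $SK_{2,\frac{m-2}{2}}$ (the complete bipartite graph $K_{2,\frac{m-2}{2}}$ with one edge subdivided) by attaching a pendant edge to a vertex of maximum degree; equivalently, take a 5-cycle $u_1u_2u_3u_4u_5$, add $\frac{m-6}{2}$ new vertices each adjacent exactly to $u_1$ and $u_3$, and one new vertex adjacent only to $u_1$. It has $m$ edges. $\lambda(\cdot)$ denotes the largest adjacency eigenvalue; $\lambda(L_m)$ is the largest root of $x^6-mx^4+(\tfrac{5m}{2}-7)x^2+(4-m)x+2-\tfrac m2$. *)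

From HB Require Import structures.
From mathcomp Require Import all_boot all_order all_algebra.
Set Implicit Arguments. Unset Strict Implicit. Unset Printing Implicit Defensive.
Import Order.TTheory GRing.Theory Num.Theory.
Local Open Scope ring_scope.

(* The graph L_m (m even, m >= 6) on the vertex set 'I_(m./2 + 3):
   vertices 0,1,2,3,4 are u1,...,u5 (the 5-cycle u1u2u3u4u5),
   vertex 5 is the pendant vertex adjacent only to u1 (= 0),
   vertices 6, ..., m./2 + 2 (there are (m-6)/2 of them) are adjacent
   exactly to u1 (= 0) and u3 (= 2). *)
Definition cyc5_edge (i j : nat) : bool :=
  [&& (i < 5)%N, (j < 5)%N & j == (i.+1 %% 5)%N].

Definition Lm_edge (i j : nat) : bool :=
  [|| cyc5_edge i j, cyc5_edge j i,
      (i == 0%N) && (j == 5%N), (j == 0%N) && (i == 5%N),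
      (i == 0%N) && (6 <= j)%N, (j == 0%N) && (6 <= i)%N,
      (i == 2%N) && (6 <= j)%N | (j == 2%N) && (6 <= i)%N].

Definition Lm_nverts (m : nat) : nat := (m./2 + 3)%N.

Definition Lm_adj (R : ringType) (m : nat) : 'M[R]_(Lm_nverts m) :=
  \matrix_(i, j) (Lm_edge i j)%:R.

Definition largest_eigenvalue (F : numFieldType) (n : nat) (A : 'M[F]_n) (l : F) :=
  eigenvalue A l /\ forall mu : F, eigenvalue A mu -> mu <= l.

From mathcomp Require Import all_boot all_order all_algebra.
From mathcomp Require Import ring lra zify polyrcf.
Set Implicit Arguments. Unset Strict Implicit. Unset Printing Implicit Defensive.
Import Order.TTheory GRing.Theory Num.Theory.
Local Open Scope ring_scope.

(* A nonnegative matrix with an entrywise positive eigenvector has the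
   corresponding eigenvalue as its largest one.  The K = (m - 6) / 2 extra
   vertices of L_m are twins of u2 (both have neighbours u1, u3).  For every
   root x > 1 of x^6 - m x^4 + (5m/2 - 7) x^2 + (4 - m) x + 2 - m/2 with
   x^2 >= K + 3 there is an explicit positive eigenvector for x, constant on
   the twins.  So lambda(L_m) lies in any interval [lo, hi] with lo > 1 and
   lo^2 >= K + 3 on which the sextic goes from negative to positive: rational
   brackets for m = 6, 8, 10, and [sqrt(m - 5/2), sqrt(m - 2)] for m >= 12. *)

Section PositiveEigenvector.

Variables (F : realFieldType) (n : nat) (A : 'M[F]_n).
Hypothesis A_ge0 : forall i j, 0 <= A i j.

(* Collatz-Wielandt: at an index j maximising |u_j| / w_j the eigenvector u
   is dominated entrywise by (|u_j| / w_j) w. *)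
Lemma eigenvalue_le_pos_eigenvector (w : 'rV_n) (l mu : F) :
  (forall i, 0 < w 0 i) -> w *m A = l *: w -> eigenvalue A mu -> mu <= l.
Proof.
move=> w_gt0 wA /eigenvalueP [u uA u_neq0].
have [i ui_neq0] : exists i, u 0 i != 0.
  apply/existsP; apply: contraR u_neq0; rewrite negb_exists => /forallP u0.
  by apply/eqP/rowP => i; rewrite mxE; apply/eqP; move: (u0 i); rewrite negbK.
pose ratio j := `|u 0 j| / w 0 j.
have [j _ ratio_max] := @arg_maxP _ F _ i xpredT ratio isT.
set c := ratio j in ratio_max.
have u_le k : `|u 0 k| <= c * w 0 k by rewrite -ler_pdivrMr //; exact: ratio_max.
have c_gt0 : 0 < c.
  by apply: lt_le_trans (ratio_max i isT); rewrite divr_gt0 ?normr_gt0.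
have uj_gt0 : 0 < `|u 0 j| by move: c_gt0; rewrite pmulr_lgt0 ?invr_gt0.
suff : `|mu| * `|u 0 j| <= l * `|u 0 j|.
  by rewrite ler_pM2r // => /(le_trans (ler_norm mu)).
have -> : `|mu| * `|u 0 j| = `|(u *m A) 0 j| by rewrite uA mxE normrM.
rewrite mxE; apply: le_trans (ler_norm_sum _ _ _) _.
apply: (@le_trans _ _ (c * \sum_k w 0 k * A k j)).
  rewrite mulr_sumr; apply: ler_sum => k _.
  by rewrite normrM (ger0_norm (A_ge0 _ _)) mulrA ler_wpM2r.
have -> : \sum_k w 0 k * A k j = l * w 0 j.
  by move: (congr1 (fun M : 'rV_n => M 0 j) wA); rewrite !mxE.
by rewrite mulrCA /c /ratio divfK ?gt_eqF.
Qed.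

Lemma largest_eigenvalue_pos_eigenvector (w : 'rV_n) (l : F) :
  (0 < n)%N -> (forall i, 0 < w 0 i) -> w *m A = l *: w ->
  largest_eigenvalue A l.
Proof.
move=> n_gt0 w_gt0 wA; split.
  apply/eigenvalueP; exists w => //; apply: contraTneq (w_gt0 (Ordinal n_gt0)).
  by move=> ->; rewrite mxE ltxx.
by move=> mu; apply: eigenvalue_le_pos_eigenvector wA.
Qed.

End PositiveEigenvector.

Lemma sqrtr_lt_sqr (R : rcfType) (a l : R) :
  0 < l -> a < l ^+ 2 -> Num.sqrt a < l.
Proof.
move=> l_gt0 a_lt.
by rewrite -[ltRHS]gtr0_norm // -sqrtr_sqr ltr_sqrt ?exprn_gt0.
Qed.

Lemma Lm_edge_twin (i j : nat) :
  (6 <= i)%N -> Lm_edge i j = (j == 0%N) || (j == 2%N).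
Proof.
move=> i_ge6; rewrite /Lm_edge /cyc5_edge i_ge6 !andbT.
have [-> -> -> ->] : [/\ (i < 5)%N = false, i == 0%N = false,
                        i == 2%N = false & i == 5%N = false].
  by split; apply/negbTE; lia.
by rewrite !andbF.
Qed.

Section TwinQuotient.

Variable R : nzRingType.

(* Entry j of (v *m Lm_adj m) when v is constant on the twins 6, 7, ...
   of u2 = vertex 1. *)
Definition Lm_nbr_sum (k : nat) (v : nat -> R) (j : nat) : R :=
  match j with
  | 0 => v 1%N + v 4%N + v 5%N + v 1%N *+ k
  | 1 => v 0%N + v 2%N
  | 2 => v 1%N + v 3%N + v 1%N *+ k
  | 3 => v 2%N + v 4%N
  | 4 => v 0%N + v 3%N
  | 5 => v 0%N
  | _ => v 0%N + v 2%N
  end.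

Lemma mulmx_Lm_adj_twin (m k : nat) (v : nat -> R) :
  Lm_nverts m = (k + 6)%N -> (forall i, (6 <= i)%N -> v i = v 1%N) ->
  (\row_(i < Lm_nverts m) v i) *m Lm_adj R m =
    \row_(j < Lm_nverts m) Lm_nbr_sum k v j.
Proof.
move=> nvE v_twin; apply/rowP => -[j j_lt]; rewrite !mxE /=.
under eq_bigr => i _ do rewrite !mxE.
rewrite -(big_mkord xpredT (fun i => v i * (Lm_edge i j)%:R)).
rewrite (big_cat_nat _ (n := 6)) ?nvE ?leq_addl //=.
rewrite [X in _ + X](eq_big_nat _ _
  (F2 := fun=> v 1%N * ((j == 0%N) || (j == 2%N))%:R)); last first.
  by move=> i /andP[i_ge6 _]; rewrite v_twin // Lm_edge_twin.
rewrite big_const_nat iter_addr_0 addnK /index_iota /= !big_cons big_nil.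
by case: j j_lt => [|[|[|[|[|[|j]]]]]] _ /=;
  rewrite !(mulr0, mulr1, add0r, addr0, mul0rn) ?addrA.
Qed.

End TwinQuotient.

Section PerronVector.

Variable R : realFieldType.

(* With m = 2 K + 6 this is the sextic of the statement. *)
Definition Lm_char (K x : R) : R :=
  x^+6 - (2*K + 6) * x^+4 + (5*K + 8) * x^+2 - (2*K + 2) * x - K - 1.

(* The entries at u1 and u3 are x (x^2 - 1) D and x (x^2 - 1) N; the
   eigen-equations at the other vertices force the remaining entries, and
   (D, N) is chosen to satisfy the one at u3.  Only the equation at u1 is
   then equivalent to Lm_char K x = 0. *)
Definition Lm_perron_vec (K x : R) (i : nat) : R :=
  let D := x^+4 - (K + 3) * x^+2 + K + 1 in
  let N := (K + 1) * (x^+2 - 1) + x in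
  match i with
  | 0 => x * (x^+2 - 1) * D
  | 2 => x * (x^+2 - 1) * N
  | 3 => x * (x * N + D)
  | 4 => x * (x * D + N)
  | 5 => (x^+2 - 1) * D
  | _ => (x^+2 - 1) * (D + N)
  end.

Lemma Lm_perron_vec_eigen (k : nat) (x : R) (j : nat) :
  Lm_char k%:R x = 0 ->
  Lm_nbr_sum k (Lm_perron_vec k%:R x) j = x * Lm_perron_vec k%:R x j.
Proof.
move=> root_x; apply/eqP; rewrite -subr_eq0; apply/eqP.
case: j => [|j]; rewrite /Lm_perron_vec /=.
  by rewrite -(mulr0 (1 - x^+2)) -root_x /Lm_char; ring.
by case: j => [|[|[|[|[|j]]]]] /=; ring.
Qed.

Lemma Lm_perron_vec_gt0 (K x : R) (i : nat) :
  0 <= K -> 1 < x -> K + 3 <= x^+2 -> 0 < Lm_perron_vec K x i.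
Proof.
move=> K_ge0 x_gt1 x2_ge.
have x_gt0 : 0 < x by apply: lt_trans x_gt1.
have x21_gt0 : 0 < x^+2 - 1 by rewrite subr_gt0 expr_gt1 ?ltW.
have D_gt0 : 0 < x^+4 - (K + 3) * x^+2 + K + 1.
  have : 0 <= x^+2 * (x^+2 - K - 3) by rewrite mulr_ge0 ?sqr_ge0 ?subr_ge0; lra.
  by rewrite -[x^+4]/(x^+(2 * 2)) exprM; lra.
have N_gt0 : 0 < (K + 1) * (x^+2 - 1) + x.
  by rewrite addr_gt0 // mulr_gt0 // ltr_wpDl.
by case: i => [|[|[|[|[|[|i]]]]]] /=;
  repeat first [assumption | apply: mulr_gt0 | apply: addr_gt0].
Qed.

Lemma Lm_largest_eigenvalue_root (m k : nat) (x : R) :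
  Lm_nverts m = (k + 6)%N -> 1 < x -> k%:R + 3 <= x^+2 -> Lm_char k%:R x = 0 ->
  largest_eigenvalue (Lm_adj R m) x.
Proof.
move=> nvE x_gt1 x2_ge root_x.
pose w := \row_(i < Lm_nverts m) Lm_perron_vec k%:R x i.
have wA : w *m Lm_adj R m = x *: w.
  rewrite (mulmx_Lm_adj_twin nvE); last by case=> [|[|[|[|[|[|i]]]]]].
  by apply/rowP => j; rewrite !mxE Lm_perron_vec_eigen.
apply: largest_eigenvalue_pos_eigenvector wA.
- by move=> i j; rewrite mxE ler0n.
- by rewrite nvE addnS.
- by move=> i; rewrite mxE Lm_perron_vec_gt0.
Qed.

Lemma Lm_char_even_powers (K y : R) :
  Lm_char K y = (y^+2)^+3 - (2*K + 6) * (y^+2)^+2 + (5*K + 8) * y^+2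
                - (2*K + 2) * y - K - 1.
Proof. by rewrite -!exprM. Qed.

(* At y^2 = 2 K + 7/2, Lm_char K y = - 3/4 y^2 - (2 K + 2) y - K - 1. *)
Lemma Lm_char_lt0 (K y : R) :
  0 <= K -> 0 <= y -> y^+2 = 2*K + 7/2 -> Lm_char K y < 0.
Proof. by move=> K_ge0 y_ge0 y2E; rewrite Lm_char_even_powers y2E; nra. Qed.

(* At y^2 = 2 K + 4, Lm_char K y = 2 K^2 + 3 K - 1 - (2 K + 2) y; squaring
   compares (2 K^2 + 3 K - 1)^2 with (2 K + 2)^2 (2 K + 4), whose difference
   4 K^4 + 4 K^3 - 27 K^2 - 46 K - 15 is positive for K >= 3 but not K = 2. *)
Lemma Lm_char_gt0 (K y : R) :
  3 <= K -> 0 <= y -> y^+2 = 2*K + 4 -> 0 < Lm_char K y.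
Proof.
move=> K_ge3 y_ge0 y2E; rewrite Lm_char_even_powers y2E.
have : (2*K + 2) * y < 2*K^+2 + 3*K - 1 by nra.
lra.
Qed.

End PerronVector.

Lemma Lm_nverts_even (m : nat) : ~~ odd m -> (6 <= m)%N ->
  exists2 k, Lm_nverts m = (k + 6)%N & m = (2 * k + 6)%N.
Proof.
move=> m_even m_ge6; exists (m./2 - 3)%N; have := odd_double_half m;
  rewrite (negbTE m_even) /Lm_nverts -muln2; lia.
Qed.

Section Brackets.

Variable R : rcfType.

Lemma Lm_char_root_between (K lo hi : R) :
  lo <= hi -> Lm_char K lo < 0 -> 0 < Lm_char K hi ->
  exists2 x, Lm_char K x = 0 & lo < x < hi.
Proof.
move=> lo_le_hi lo_lt0 hi_gt0.
pose P : {poly R} := 'X^6 - (2*K + 6)%:P * 'X^4 + (5*K + 8)%:P * 'X^2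
  - (2*K + 2)%:P * 'X - (K + 1)%:P.
have PE y : P.[y] = Lm_char K y.
  rewrite !(hornerD, hornerN, hornerCM, hornerC, hornerXn, hornerX).
  by rewrite /Lm_char; ring.
have sign_change : P.[lo] * P.[hi] < 0 by rewrite !PE nmulr_rlt0.
have [x] := poly_ivtoo lo_le_hi sign_change.
by rewrite in_itv /= => lo_x_hi /rootP; rewrite PE; exists x.
Qed.

Lemma Lm_largest_eigenvalue_between (m k : nat) (lo hi : R) :
  Lm_nverts m = (k + 6)%N -> 1 < lo -> lo <= hi -> k%:R + 3 <= lo^+2 ->
  Lm_char k%:R lo < 0 -> 0 < Lm_char k%:R hi ->
  exists l, largest_eigenvalue (Lm_adj R m) l /\ lo < l < hi.
Proof.
move=> nvE lo_gt1 lo_le_hi lo2_ge lo_lt0 hi_gt0.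
have [l root_l /andP[lo_l l_hi]] := Lm_char_root_between lo_le_hi lo_lt0 hi_gt0.
exists l; split; last by rewrite lo_l l_hi.
apply: Lm_largest_eigenvalue_root nvE _ _ root_l; first exact: lt_trans lo_l.
by apply: le_trans lo2_ge _; nra.
Qed.

Lemma Lm_largest_eigenvalue_large (m k : nat) :
  Lm_nverts m = (k + 6)%N -> m = (2 * k + 6)%N -> (3 <= k)%N ->
  exists l : R, largest_eigenvalue (Lm_adj R m) l /\
    Num.sqrt (m%:R - 5 / 2) < l /\ l < Num.sqrt (m%:R - 2).
Proof.
move=> nvE mE k_ge3.
have mR : m%:R = 2 * k%:R + 6 :> R by rewrite mE natrD natrM.
have K_ge3 : 3 <= k%:R :> R by rewrite (ler_nat R 3).
have lo2 : Num.sqrt (m%:R - 5 / 2) ^+ 2 = 2 * k%:R + 7 / 2 :> R.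
  by rewrite mR sqr_sqrtr; lra.
have hi2 : Num.sqrt (m%:R - 2) ^+ 2 = 2 * k%:R + 4 :> R.
  by rewrite mR sqr_sqrtr; lra.
have lo_ge0 := sqrtr_ge0 (m%:R - 5 / 2 : R).
have [|||||l [l_max /andP[lo_l l_hi]]] :=
  @Lm_largest_eigenvalue_between m k (Num.sqrt (m%:R - 5 / 2))
    (Num.sqrt (m%:R - 2)) nvE.
- by nra.
- by rewrite ler_sqrt mR; lra.
- by rewrite lo2; lra.
- exact: Lm_char_lt0 (ler0n _ _) lo_ge0 lo2.
- exact: Lm_char_gt0 K_ge3 (sqrtr_ge0 _) hi2.
- by exists l.
Qed.

Lemma Lm_largest_eigenvalue_small (m k : nat) (lo hi : R) :
  Lm_nverts m = (k + 6)%N -> 1 < lo -> lo <= hi -> k%:R + 3 <= lo^+2 ->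
  m%:R - 2 < lo^+2 -> Lm_char k%:R lo < 0 -> 0 < Lm_char k%:R hi ->
  exists l, largest_eigenvalue (Lm_adj R m) l /\
    Num.sqrt (m%:R - 2) < l /\ lo <= l < hi.
Proof.
move=> nvE lo_gt1 lo_le_hi lo2_ge lo2_gt lo_lt0 hi_gt0.
have [l [l_max /andP[lo_l l_hi]]] :=
  Lm_largest_eigenvalue_between nvE lo_gt1 lo_le_hi lo2_ge lo_lt0 hi_gt0.
exists l; split=> //; split; last by rewrite (ltW lo_l).
by apply: sqrtr_lt_sqr; nra.
Qed.

Lemma Lm_largest_eigenvalue_6_8_10 (m : nat) :
  m \in [:: 6; 8; 10]%N ->
  exists l : R, largest_eigenvalue (Lm_adj R m) l /\ Num.sqrt (m%:R - 2) < l /\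
    (m = 6%N -> (2 + 1149 / 10 ^+ 4) <= l < (2 + 1150 / 10 ^+ 4)) /\
    (m = 8%N -> (2 + 4938 / 10 ^+ 4) <= l < (2 + 4939 / 10 ^+ 4)) /\
    (m = 10%N -> (2 + 8424 / 10 ^+ 4) <= l < (2 + 8425 / 10 ^+ 4)).
Proof.
rewrite !inE => /or3P[] /eqP ->; [
  have [] := @Lm_largest_eigenvalue_small 6 0
    (2 + 1149 / 10 ^+ 4) (2 + 1150 / 10 ^+ 4) erefl |
  have [] := @Lm_largest_eigenvalue_small 8 1
    (2 + 4938 / 10 ^+ 4) (2 + 4939 / 10 ^+ 4) erefl |
  have [] := @Lm_largest_eigenvalue_small 10 2
    (2 + 8424 / 10 ^+ 4) (2 + 8425 / 10 ^+ 4) erefl ];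
  rewrite /Lm_char; try lra.
all: move=> l [l_max [l_gt l_in]]; exists l; do 2!split=> [//|].
(* [discriminate] goes first: [exact: l_in] against a bracket with other
   constants makes Rocq try, slowly, to unify distinct real numerals. *)
all: do !split; move=> m_eq; first [discriminate m_eq | exact: l_in].
Qed.

End Brackets.

Theorem lemma2p1 (R : rcfType) (m : nat) :
  ~~ odd m -> (6 <= m)%N ->
  exists l : R, largest_eigenvalue (Lm_adj R m) l /\
    ((m \in [:: 6; 8; 10]%N) -> Num.sqrt (m%:R - 2) < l) /\
    ((12 <= m)%N -> Num.sqrt (m%:R - 5 / 2) < l /\ l < Num.sqrt (m%:R - 2)) /\
    (m = 6%N -> (2 + 1149 / 10 ^+ 4) <= l < (2 + 1150 / 10 ^+ 4)) /\
    (m = 8%N -> (2 + 4938 / 10 ^+ 4) <= l < (2 + 4939 / 10 ^+ 4)) /\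
    (m = 10%N -> (2 + 8424 / 10 ^+ 4) <= l < (2 + 8425 / 10 ^+ 4)).
Proof.
move=> m_even m_ge6; have [k nvE mE] := Lm_nverts_even m_even m_ge6.
have [k_ge3 | k_le2] := leqP 3 k.
  have m_ge12 : (12 <= m)%N by lia.
  have m_not_small : m \notin [:: 6; 8; 10]%N by rewrite !inE; lia.
  have [l [l_max l_bounds]] := Lm_largest_eigenvalue_large R nvE mE k_ge3.
  exists l; split=> [//|]; split=> [/(negP m_not_small)[]|]; split=> [//|].
  by do !split; move=> m_small; rewrite m_small in m_ge12.
have m_small : m \in [:: 6; 8; 10]%N by rewrite !inE; lia.
have m_lt12 : (m < 12)%N by lia.
have [l [l_max [l_gt l_brackets]]] := Lm_largest_eigenvalue_6_8_10 R m_small.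
exists l; split=> [//|]; split=> [//|]; split=> [|//].
by rewrite leqNgt m_lt12.
Qed.
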